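(* For a finite group $G$ the following are equivalent: (1) $G$ is nilpotent; (2) every abnormal subgroup of $G$ is $\mathrm{F}^*(G)$-subnormal; (3) the normalizers of all Sylow subgroups of $G$ are $\mathrm{F}^*(G)$-subnormal; (4) all cyclic primary subgroups of $G$ are $\mathrm{F}^*(G)$-subnormal; (5) all Sylow subgroups of $G$ are $\mathrm{F}^*(G)$-subnormal.
   Context: For a subgroup $R$ of $G$, a subgroup $H$ of $G$ is $R$-subnormal if $H$ is subnormal in $\langle H,R\rangle$. $\mathrm{F}^*(G)$ is the generalized Fitting subgroup (the largest normal quasinilpotent subgroup). A subgroup $H$ is abnormal in $G$ if $g\in\langle H,H^g\rangle$ for all $g\in G$. A cyclic primary subgroup is a cyclic subgroup of prime power order. *)

From mathcomp Require Import all_boot all_fingroup all_solvable.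
Set Implicit Arguments. Unset Strict Implicit. Unset Printing Implicit Defensive.
Local Open Scope group_scope.

Section Defs.
Variable gT : finGroupType.
Implicit Types (X G H R U V : {group gT}).

(* C_X(U/V): elements of X acting trivially (by conjugation) on U/V *)
Definition factor_cent (X U V : {set gT}) : {set gT} :=
  [set x in X | [forall u in U, [~ u, x] \in V]].

(* X is quasinilpotent: every element of X induces an inner automorphism on
   every chief factor U/V of X, i.e. X = U * C_X(U/V). *)
Definition quasinilpotent X : bool :=
  [forall U : {group gT}, forall V : {group gT},
     chief_factor X V U ==> (U * factor_cent X U V == X)].

(* F*(G): the largest normal quasinilpotent subgroup, realized as the join of
   all normal quasinilpotent subgroups of G. *)
Definition Fstar (G : {set gT}) : {set gT} :=
  <<\bigcup_(N : {group gT} | (N <| G) && quasinilpotent N) N>>.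

Definition R_subnormal (R H : {set gT}) : bool := H <|<| <<H :|: R>>.

Definition abnormal (H G : {set gT}) : bool :=
  (H \subset G) && [forall g in G, g \in <<H :|: H :^ g>>].

Definition cyclic_primary (H G : {set gT}) : Prop :=
  [/\ H \subset G, cyclic H & exists p : nat, prime p /\ p.-group H].
End Defs.

From mathcomp Require Import all_boot all_fingroup all_solvable.
Set Implicit Arguments. Unset Strict Implicit. Unset Printing Implicit Defensive.
Local Open Scope group_scope.

(* (1) implies the other conditions since every subgroup of a nilpotent group
   is subnormal, and (2) implies (3) since the normaliser of a Sylow subgroup
   is abnormal.  Conversely, a p-subgroup X that is subnormal in some K
   between F*(G) and G lies in O_p(K), so [X, F*(G)] <= O_p(K) :&: F*(G) =
   O_p(F*(G)), which lies in every Sylow p-subgroup.  Each of (3), (4), (5)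
   therefore makes F*(G) normalise every Sylow subgroup.  For Sylow subgroups
   P and Q of distinct primes, [F*(G), P] <= O_p(F*(G)) centralises Q and
   [F*(G), Q] <= O_q(F*(G)) centralises P, so by the three subgroup lemma
   [P, Q] centralises F*(G), hence lies in F*(G); as P is a normal Hall
   subgroup of P F*(G), Q normalises P.  Thus all Sylow subgroups are normal.
   The inclusion C_G(F*(G)) <= F*(G) comes from the definition: otherwise
   take N normal in G minimal over Z = C_G(F*(G)) :&: F*(G) inside
   C_G(F*(G)).  For a chief factor U/V of N, either U <= Z V and N
   centralises U/V, or U :&: Z <= V and N = U C_N(U/V); so N is
   quasinilpotent and contained in F*(G), a contradiction. *)

Section SubgroupLemmas.
Variable gT : finGroupType.
Implicit Types (F G H K M N P Q R T U V X Z : {group gT}).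

Lemma mingroup_sub_or_commg N Z M T :
    [min M of K | (N \subset 'N(K)) && (Z \proper K)] ->
    M \subset N -> T \subset N -> N \subset 'N(T) -> Z \subset T ->
  M \subset T \/ [~: T, M] \subset Z.
Proof.
case/mingroupP=> /andP[nMN ltZM] minM sMN sTN nTN sZT.
have sZTM : Z \subset T :&: M by rewrite subsetI sZT proper_sub.
have [ltZTM | ] := boolP (Z \proper T :&: M).
  by left; rewrite -(minM [group of T :&: M]) ?subsetIl ?subsetIr ?normsI.
rewrite properE sZTM /= negbK => sTMZ; right; apply: subset_trans sTMZ.
by apply: commg_subI; rewrite subsetI subxx (subset_trans _ nMN, subset_trans _ nTN).
Qed.

(* N is generated by the G-conjugates of a minimal N-invariant subgroup M
   over Z, and each conjugate of M either lies in T or commutes with T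
   modulo Z. *)
Lemma min_normal_sub_of_commg G Z N T X :
    [min N of K | (K <| G) && (Z \proper K)] -> G \subset 'N(Z) ->
    T \subset N -> N \subset 'N(T) -> Z \subset T -> T \subset X ->
    (forall K, K \subset N -> [~: T, K] \subset Z -> K \subset X) ->
  N \subset X.
Proof.
case/mingroupP=> /andP[nsNG ltZN] minN nZG sTN nTN sZT sTX cTZ_sub.
have [M minM sMN] := @mingroup_exists _
  (fun K => (N \subset 'N(K)) && (Z \proper K)) N (introT andP (conj (normG N) ltZN)).
have ltZM : Z \proper M by case/mingroupP: minM => /andP[].
have {minN}<- : <<class_support M G>> = N.
  have sMG := subset_trans sMN (normal_sub nsNG).
  have sMGN : <<class_support M G>> \subset N.
    by rewrite gen_subG class_support_sub_norm ?normal_norm.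
  apply: minN sMGN; rewrite /normal gen_subG class_support_subG //.
  rewrite norms_gen ?class_support_norm ?(proper_sub_trans ltZM) //.
  by rewrite sub_gen ?sub_class_support.
rewrite gen_subG class_supportEr; apply/bigcupsP=> h Gh.
have Nh : N :^ h = N by apply: (normsP (normal_norm nsNG)).
have Zh : Z :^ h = Z by apply: (normsP nZG).
have sThN : T :^ h^-1 \subset N by rewrite sub_conjgV Nh.
have nThN : N \subset 'N(T :^ h^-1) by rewrite normJ -sub_conjg Nh.
have sZTh : Z \subset T :^ h^-1 by rewrite -sub_conjg Zh.
have [sMTh | cThMZ] := mingroup_sub_or_commg minM sMN sThN nThN sZTh.
  by apply: subset_trans sTX; rewrite sub_conjg.
apply: cTZ_sub; first by rewrite -Nh conjSg.
by rewrite -{1}(conjsgKV h T) -conjsRg -Zh conjSg.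
Qed.

Lemma maxnormal_sub_mulg_or_meet N U V Z :
    maxnormal V U N -> U <| N -> N \subset 'N(Z) ->
  U \subset Z * V \/ U :&: Z \subset V.
Proof.
case/maxgroupP=> /andP[ltVU nVN] maxV /andP[sUN nUN] nZN.
have sVN := subset_trans (proper_sub ltVU) sUN.
have nUZ_V : V \subset 'N(U :&: Z) by rewrite (subset_trans sVN) ?normsI.
have sWU : (U :&: Z) <*> V \subset U by rewrite join_subG subsetIl proper_sub.
have [eWU | ltWU] := eqVproper sWU.
  by left; rewrite -{1}eWU norm_joinEr // mulSg ?subsetIr.
right; apply: subset_trans (joing_subl _ V) _.
by rewrite (maxV [group of (U :&: Z) <*> V]) ?joing_subr //= ltWU normsY ?normsI.
Qed.

Lemma subnormal_sub_pcore pi X K : pi.-group X -> X <|<| K -> X \subset 'O_pi(K).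
Proof.
move=> piX /subnormalP[s serX <-]; elim/last_ind: s serX => [_ | s L IHs] /=.
  exact: pcore_max (normal_refl X).
rewrite rcons_path last_rcons => /andP[/IHs sXO nsL].
apply: subset_trans sXO (pcore_max (pcore_pgroup _ _) _).
exact: char_normal_trans (pcore_char _ _) nsL.
Qed.

Lemma subnormal_commg_sub_pcore pi X K F :
    pi.-group X -> X <|<| K -> F \subset K -> K \subset 'N(F) ->
  [~: X, F] \subset 'O_pi(F).
Proof.
move=> piX snXK sFK nFK; have nsFK : F <| K by rewrite /normal sFK.
rewrite -(pcore_setI_normal pi nsFK).
apply: subset_trans (commSg F (subnormal_sub_pcore piX snXK)) _.
apply: commg_subI; rewrite subsetI subxx ?(subset_trans _ nFK) ?pcore_sub //=.
by rewrite (subset_trans sFK) ?gFnorm.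
Qed.

Lemma normal_pcore_sub_Hall pi G N H : N <| G -> pi.-Hall(G) H -> 'O_pi(N) \subset H.
Proof.
move=> nsNG hallH; rewrite -(pcore_setI_normal pi nsNG).
exact: subset_trans (subsetIl _ _) (pcore_sub_Hall hallH).
Qed.

Lemma sub_of_Sylows G H :
  (forall p, prime p -> exists2 P : {group gT}, p.-Sylow(G) P & P \subset H) ->
  G \subset H.
Proof.
move=> sylH.
rewrite -(@Sylow_transversal_gen _ [set P : {group gT} | P \subset G :&: H] G).
- by rewrite gen_subG; apply/bigcupsP=> P; rewrite inE subsetI => /andP[].
- by move=> P; rewrite inE subsetI => /andP[].
move=> p; rewrite mem_primes => /and3P[pr_p _ _].
by have [P sylP sPH] := sylH p pr_p; exists P; rewrite // inE subsetI (pHall_sub sylP).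
Qed.

Lemma Sylows_normal_nil G :
  (forall p P, prime p -> p.-Sylow(G) P -> P <| G) -> nilpotent G.
Proof.
move=> nsSyl; apply: nilpotentS (Fitting_nil G); apply: sub_of_Sylows => p pr_p.
have [P sylP] := Sylow_exists p G; exists P => //.
exact: Fitting_max (nsSyl p P pr_p sylP) (pgroup_nil (pHall_pgroup sylP)).
Qed.

Lemma Sylow_normal_of_norm p G P :
    p.-Sylow(G) P ->
    (forall q Q, prime q -> q != p -> q.-Sylow(G) Q -> Q \subset 'N(P)) ->
  P <| G.
Proof.
move=> sylP nPSyl; rewrite /normal (pHall_sub sylP); apply: sub_of_Sylows => q pr_q.
have [-> | neq_qp] := eqVneq q p; first by exists P; rewrite ?normG.
by have [Q sylQ] := Sylow_exists q G; exists Q; rewrite ?(nPSyl q).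
Qed.

Lemma normal_Hall_norm pi H P Q :
  pi.-Hall(H) P -> P <| H -> [~: P, Q] \subset H -> Q \subset 'N(P).
Proof.
move=> hallP nsPH sPQH; apply/subsetP=> y Qy; rewrite inE.
apply/subsetP=> _ /imsetP[x Px ->].
rewrite (mem_normal_Hall hallP nsPH) ?p_eltJ ?(mem_p_elt (pHall_pgroup hallP)) //.
rewrite conjg_mulR groupM ?(subsetP (normal_sub nsPH) x Px) //.
exact: (subsetP sPQH) (mem_commg Px Qy).
Qed.

Lemma nilpotent_R_subnormal G R H :
  nilpotent G -> H \subset G -> R \subset G -> R_subnormal R H.
Proof.
move=> nilG sHG sRG; apply: nilpotent_subnormal; last by rewrite sub_gen ?subsetUl.
by apply: nilpotentS nilG; rewrite gen_subG subUset sHG.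
Qed.

Lemma Sylow_subnorm_abnormal p G P : p.-Sylow(G) P -> abnormal 'N_G(P) G.
Proof.
move=> sylP; rewrite /abnormal subsetIl; apply/forall_inP=> g Gg.
set N := 'N_G(P); set J := <<N :|: N :^ g>>.
have sJG : J \subset G by rewrite gen_subG subUset subsetIl -(conjGid Gg) conjSg subsetIl.
have sNJ : N \subset J by rewrite sub_gen ?subsetUl.
have sPN : P \subset N by rewrite subsetI (pHall_sub sylP) normG.
have sylJ_P : p.-Sylow(J) P := pHall_subl (subset_trans sPN sNJ) sJG sylP.
have sylJ_Pg : p.-Sylow(J) (P :^ g).
  by rewrite (pHall_subl _ sJG) ?pHallJ // sub_gen // subsetU // conjSg sPN orbT.
have [j Jj defPg] := Sylow_trans sylJ_P sylJ_Pg.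
have Ngj : g * j^-1 \in N.
  rewrite inE groupM ?groupV ?(subsetP sJG j Jj) //=.
  by apply/normP; rewrite conjsgM defPg conjsgK.
by have := groupM (subsetP sNJ _ Ngj) Jj; rewrite mulgKV.
Qed.

End SubgroupLemmas.

Section FactorCentralizer.
Variable gT : finGroupType.
Implicit Types (K U V X Z : {group gT}).

Lemma factor_cent_group_set X U V : X \subset 'N(V) -> group_set (factor_cent X U V).
Proof.
move=> nVX; apply/group_setP; split=> [|x y].
  by rewrite inE group1; apply/forall_inP=> u _; rewrite commg1.
rewrite !inE => /andP[Xx /forall_inP cUVx] /andP[Xy /forall_inP cUVy].
rewrite groupM //; apply/forall_inP=> u Uu.
by rewrite commgMJ groupM ?cUVy // memJ_norm ?cUVx ?(subsetP nVX).
Qed.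

Lemma sub_factor_cent X U V K :
  (K \subset factor_cent X U V) = (K \subset X) && ([~: U, K] \subset V).
Proof.
apply/subsetP/andP=> [cUVK | [sKX cUVK] k Kk].
  split; first by apply/subsetP=> k /cUVK; rewrite inE => /andP[].
  rewrite gen_subG; apply/subsetP=> _ /imset2P[u k Uu Kk ->].
  by have:= cUVK k Kk; rewrite inE => /andP[_ /forall_inP->].
rewrite inE (subsetP sKX) //=; apply/forall_inP=> u Uu.
exact: (subsetP cUVK) (mem_commg Uu Kk).
Qed.

Lemma factor_cent_central X U V Z :
  X \subset 'N(V) -> X \subset 'C(Z) -> U \subset Z * V -> X \subset factor_cent X U V.
Proof.
move=> nVX cZX sUZV; rewrite sub_factor_cent subxx gen_subG.
apply/subsetP=> _ /imset2P[u x Uu Xx ->].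
have /mulsgP[z v Zz Vv ->] := subsetP sUZV u Uu; rewrite commMgJ.
have /commgP/eqP-> : commute z x by apply/commute_sym/(centP (subsetP cZX x Xx)).
by rewrite conj1g mul1g commgEl groupM ?groupV ?memJ_norm ?(subsetP nVX).
Qed.

End FactorCentralizer.

Section GeneralizedFitting.
Variable gT : finGroupType.
Implicit Types (A : {set gT}) (G H N P X Z : {group gT}).

Lemma Fstar_group_set A : group_set (Fstar A).
Proof. exact: groupP. Qed.
Canonical Fstar_group A := Group (Fstar_group_set A).

Lemma Fstar_normal G : Fstar G <| G.
Proof.
rewrite /normal gen_subG norms_gen ?andbT; first by apply/bigcupsP=> N /andP[/andP[]].
by apply/norms_bigcup/bigcapsP=> N /andP[/andP[]].
Qed.

Lemma Fstar_max G N : N <| G -> quasinilpotent N -> N \subset Fstar G.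
Proof. by move=> nsNG qnN; rewrite sub_gen // (bigcup_max N) ?nsNG. Qed.

Lemma min_normal_central_quasinilpotent G Z N :
    [min N of K | (K <| G) && (Z \proper K)] -> G \subset 'N(Z) -> N \subset 'C(Z) ->
  quasinilpotent N.
Proof.
move=> minN nZG cZN; have [/andP[nsNG ltZN] _] := mingroupP minN.
have sZN := proper_sub ltZN; have nZN := subset_trans cZN (cent_sub Z).
apply/forallP=> U; apply/forallP=> V; apply/implyP=> /andP[maxV nsUN].
have [sUN nUN] := andP nsUN.
have nVN : N \subset 'N(V) by case/maxgroupP: maxV => /andP[].
pose C := Group (factor_cent_group_set U nVN).
have sCN : C \subset N by have:= subxx C; rewrite sub_factor_cent => /andP[].
rewrite eqEsubset mul_subG //= -(norm_joinEr (subset_trans sCN nUN)).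
have [sUZV | sUZV] := maxnormal_sub_mulg_or_meet maxV nsUN nZN.
  exact: subset_trans (factor_cent_central nVN cZN sUZV) (joing_subr U C).
have sZC : Z \subset C.
  rewrite sub_factor_cent sZN.
  by have /commG1P-> := subset_trans sUN cZN; rewrite sub1G.
apply: (min_normal_sub_of_commg minN nZG (T := U <*> Z)).
- by rewrite join_subG sUN.
- exact: normsY.
- exact: joing_subr.
- by rewrite join_subG joing_subl (subset_trans sZC) ?joing_subr.
move=> K sKN cUZ_KZ; apply: subset_trans (joing_subr U C).
rewrite sub_factor_cent sKN (subset_trans _ sUZV) // subsetI.
by rewrite commg_subl (subset_trans sKN) // (subset_trans _ cUZ_KZ) ?commSg ?joing_subl.
Qed.

Lemma cent_sub_Fstar G : 'C_G(Fstar G) \subset Fstar G.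
Proof.
set F := Fstar G; have nsFG : F <| G := Fstar_normal G.
have nsCG : 'C_G(F) <| G.
  by rewrite -{2}(setIidPl (normal_norm nsFG)) subcent_normal.
apply/idPn => not_sCF; set Z := ('C_G(F) :&: F)%G.
have ltZC : Z \proper 'C_G(F) by rewrite properE subsetIl subsetI subxx.
have [N minN sNC] := @mingroup_exists _
  (fun K => (K <| G) && (Z \proper K)) 'C_G(F) (introT andP (conj nsCG ltZC)).
have cZN : N \subset 'C(Z).
  by rewrite (subset_trans sNC) // (subset_trans (subsetIr G _)) ?centS ?subsetIr.
have [/andP[nsNG ltZN] _] := mingroupP minN.
have qnN := min_normal_central_quasinilpotent minN (normal_norm (normalI nsCG nsFG)) cZN.
by case/andP: ltZN => _; rewrite subsetI sNC Fstar_max.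
Qed.

Lemma commg_Fstar_sub_Sylow p G P X H :
    p.-Sylow(G) P -> p.-group X -> X <|<| H -> H \subset G -> R_subnormal (Fstar G) H ->
  [~: X, Fstar G] \subset P.
Proof.
move=> sylP pX snXH sHG snH; have nsFG := Fstar_normal G.
apply: subset_trans (normal_pcore_sub_Hall nsFG sylP).
apply: subnormal_commg_sub_pcore pX (subnormal_trans snXH snH) _ _.
  by rewrite sub_gen ?subsetUr.
by rewrite (subset_trans _ (normal_norm nsFG)) // gen_subG subUset sHG normal_sub.
Qed.

Lemma Fstar_norm_R_subnormal_Sylow p G P H :
    p.-Sylow(G) P -> P <|<| H -> H \subset G -> R_subnormal (Fstar G) H ->
  Fstar G \subset 'N(P).
Proof.
by move=> sylP; rewrite -commg_subl; apply: commg_Fstar_sub_Sylow (pHall_pgroup sylP).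
Qed.

Lemma Fstar_norm_Sylow_of_cycles p G P :
    p.-Sylow(G) P -> {in P, forall x, R_subnormal (Fstar G) <[x]>} ->
  Fstar G \subset 'N(P).
Proof.
move=> sylP snX; rewrite -commg_subl gen_subG; apply/subsetP=> _ /imset2P[x f Px Ff ->].
have pX : p.-group <[x]> := mem_p_elt (pHall_pgroup sylP) Px.
have sXG : <[x]> \subset G by rewrite cycle_subG (subsetP (pHall_sub sylP)).
have sXF_P := commg_Fstar_sub_Sylow sylP pX (subnormal_refl _) sXG (snX x Px).
exact: (subsetP sXF_P) (mem_commg (cycle_id x) Ff).
Qed.

End GeneralizedFitting.

Section FstarNormalizingSylows.
Variables (gT : finGroupType) (G : {group gT}).
Implicit Types (p q : nat) (P Q : {group gT}).
Hypothesis nSylF : forall p P, prime p -> p.-Sylow(G) P -> Fstar G \subset 'N(P).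
Local Notation F := (Fstar_group G).

Lemma commg_pcore_Fstar_Sylow p q Q :
  prime q -> q != p -> q.-Sylow(G) Q -> [~: 'O_p(F), Q] = 1.
Proof.
move=> pr_q neq_qp sylQ; have nsOG := char_normal_trans (pcore_char p F) (Fstar_normal G).
have p'Q : p^'.-group Q by apply: sub_pgroup (pHall_pgroup sylQ) => r /eqnP->.
apply/trivgP; rewrite -(coprime_TIg (pnat_coprime (pcore_pgroup p F) p'Q)).
apply: commg_subI; rewrite subsetI subxx /=.
  exact: subset_trans (pcore_sub _ _) (nSylF pr_q sylQ).
exact: subset_trans (pHall_sub sylQ) (normal_norm nsOG).
Qed.

Lemma commg_Fstar_Sylow_sub_pcore p P :
  prime p -> p.-Sylow(G) P -> [~: F, P] \subset 'O_p(F).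
Proof.
move=> pr_p sylP; apply: pcore_max.
  by apply: pgroupS (pHall_pgroup sylP); rewrite commg_subr (nSylF pr_p sylP).
rewrite /normal commg_norml commg_subl andbT.
exact: subset_trans (pHall_sub sylP) (normal_norm (Fstar_normal G)).
Qed.

Lemma commg_Sylows_sub_Fstar p q P Q :
    prime p -> prime q -> q != p -> p.-Sylow(G) P -> q.-Sylow(G) Q ->
  [~: P, Q] \subset F.
Proof.
move=> pr_p pr_q neq_qp sylP sylQ.
have cFPQ : [~: P, Q, F] = 1.
  have neq_pq : p != q by rewrite eq_sym.
  apply: three_subgroup; apply/trivgP.
    rewrite -(commg_pcore_Fstar_Sylow pr_p neq_pq sylP) commSg //.
    by rewrite commGC commg_Fstar_Sylow_sub_pcore.
  rewrite -(commg_pcore_Fstar_Sylow pr_q neq_qp sylQ).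
  by rewrite commSg ?commg_Fstar_Sylow_sub_pcore.
apply: subset_trans (cent_sub_Fstar G); rewrite subsetI (introT commG1P cFPQ) andbT.
rewrite (subset_trans (commSg Q (pHall_sub sylP))) // commg_subl.
exact: subset_trans (pHall_sub sylQ) (normG G).
Qed.

Lemma Sylow_norm_Sylow p q P Q :
    prime p -> prime q -> q != p -> p.-Sylow(G) P -> q.-Sylow(G) Q ->
  Q \subset 'N(P).
Proof.
move=> pr_p pr_q neq_qp sylP sylQ; have sFG := normal_sub (Fstar_normal G).
apply: (@normal_Hall_norm _ p (P <*> F)).
- by apply: (pHall_subl (joing_subl P F) _ sylP); rewrite join_subG (pHall_sub sylP).
- by rewrite /normal joing_subl join_subG normG (nSylF pr_p sylP).
exact: subset_trans (commg_Sylows_sub_Fstar pr_p pr_q neq_qp sylP sylQ) (joing_subr P F).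
Qed.

Lemma Fstar_norm_Sylows_nil : nilpotent G.
Proof.
apply: Sylows_normal_nil => p P pr_p sylP; apply: (Sylow_normal_of_norm sylP).
by move=> q Q pr_q neq_qp; apply: (Sylow_norm_Sylow pr_p pr_q neq_qp sylP).
Qed.

End FstarNormalizingSylows.

Theorem theorem11 (gT : finGroupType) (G : {group gT}) :
  [<-> nilpotent G;
       forall H : {group gT}, abnormal H G -> R_subnormal (Fstar G) H;
       forall (p : nat) (P : {group gT}), prime p -> P \in 'Syl_p(G) ->
         R_subnormal (Fstar G) 'N_G(P);
       forall H : {group gT}, cyclic_primary H G -> R_subnormal (Fstar G) H;
       forall (p : nat) (P : {group gT}), prime p -> P \in 'Syl_p(G) ->
         R_subnormal (Fstar G) P].
Proof.
have sFG : Fstar G \subset G := normal_sub (Fstar_normal G).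
have nil_R_subnormal (H : {group gT}) :
    nilpotent G -> H \subset G -> R_subnormal (Fstar G) H.
  by move=> nilG sHG; apply: nilpotent_R_subnormal nilG sHG sFG.
tfae=> [nilG H /andP[sHG _] | abnR p P _ | snN H [sHG _ _] | snC q Q _ | snP].
- exact: nil_R_subnormal.
- by rewrite inE => sylP; apply/abnR/(Sylow_subnorm_abnormal sylP).
- apply: nil_R_subnormal sHG; apply: Fstar_norm_Sylows_nil => p P pr_p sylP.
  apply: (Fstar_norm_R_subnormal_Sylow sylP _ (subsetIl G 'N(P))).
    by rewrite normal_subnormal ?normal_subnorm ?(pHall_sub sylP).
  by apply: (snN p P pr_p); rewrite inE.
- rewrite inE => /pHall_sub sQG; apply: nil_R_subnormal sQG.
  apply: Fstar_norm_Sylows_nil => p P pr_p sylP.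
  apply: (Fstar_norm_Sylow_of_cycles sylP) => x Px.
  have pX := mem_p_elt (pHall_pgroup sylP) Px.
  apply: snC; split; [|exact: cycle_cyclic | by exists p].
  by rewrite cycle_subG (subsetP (pHall_sub sylP)).
apply: Fstar_norm_Sylows_nil => p P pr_p sylP.
apply: (Fstar_norm_R_subnormal_Sylow sylP (subnormal_refl P) (pHall_sub sylP)).
by apply: (snP p P pr_p); rewrite inE.
Qed.
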